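(* For all integers $1\le k<N$, $$\alpha\bigl(P^{\mathsf{cc}}_{k,N}\bigr)\;\ge\;\frac{1}{19}\,\alpha\bigl(P^{\mathsf{ucc}}_{k,N}\bigr).$$
   Context: $\Theta_{k,N}$ denotes the set of $k$-tuples $(x_1,\dots,x_k)\in[N]^k$ with pairwise distinct entries. Standard $k$-clique $N$-coloring chain $P^{\mathsf{cc}}_{k,N}$: the Markov chain on $\Theta_{k,N}$ which from state $x=(x_1,\dots,x_k)$ samples $\boldsymbol i\in[k]$ uniformly and then $\boldsymbol\ell$ uniformly from $\{\ell\in[N]:\ell\notin\{x_1,\dots,x_k\}\}\cup\{x_{\boldsymbol i}\}$ (a set of size $N-k+1$), and moves to $x$ with its $\boldsymbol i$-th entry replaced by $\boldsymbol\ell$. Uniform $k$-clique $N$-coloring chain $P^{\mathsf{ucc}}_{k,N}$: for $x\in\Theta_{k,N}$, $i\in[k]$, $\ell\in[N]$, let $x^{i,\ell}$ be $x$ with the $i$-th entry replaced by $\ell$ if $\ell\notin\{x_1,\dots,x_k\}$, and $x$ with the entries in positions $i$ and $j$ swapped if $\ell=x_j$. The chain moves from $x$ to $x^{\boldsymbol i,\boldsymbol\ell}$ with $\boldsymbol i\in[k]$, $\boldsymbol\ell\in[N]$ uniform and independent. Both chains have the uniform stationary distribution on $\Theta_{k,N}$. Log-Sobolev constant: for an ergodic Markov chain with transition matrix $P$ on finite state space $V$ with stationary distribution $\pi$, $\mathcal E_P(g,g)=\frac12\sum_{x,y\in V}(g(x)-g(y))^2\pi(x)P(x,y)$; for $f:V\to\mathbb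 R_{\ge 0}$, $\mathrm{Ent}_\pi[f]=\sum_{x}\pi(x)f(x)\log\frac{f(x)}{\mathbb E_\pi[f]}$ (natural log); and $\alpha(P)=\inf\{\mathcal E_P(\sqrt f,\sqrt f)/\mathrm{Ent}_\pi[f] : f\ge 0,\ f \text{ non-constant}\}$. *)

From HB Require Import structures.
From mathcomp Require Import all_boot all_order all_algebra.
From mathcomp Require Import classical_sets boolp reals exp.
Set Implicit Arguments. Unset Strict Implicit. Unset Printing Implicit Defensive.
Import Order.TTheory GRing.Theory Num.Theory.
Local Open Scope ring_scope.
Local Open Scope classical_set_scope.

Section Functionals.
Variables (R : realType) (V : finType).

Definition dirichlet (P : V -> V -> R) (pi : V -> R) (g : V -> R) : R :=
  2^-1 * \sum_(x : V) \sum_(y : V) (g x - g y) ^+ 2 * pi x * P x y.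

Definition expect (pi : V -> R) (f : V -> R) : R := \sum_(x : V) pi x * f x.

Definition entropy (pi : V -> R) (f : V -> R) : R :=
  \sum_(x : V) pi x * (if f x == 0 then 0 else f x * ln (f x / expect pi f)).

Definition logSobolev (P : V -> V -> R) (pi : V -> R) : R :=
  inf [set r : R | exists f : V -> R,
         [/\ forall x, 0 <= f x, exists x y, f x != f y &
             r = dirichlet P pi (fun x => Num.sqrt (f x)) / entropy pi f]].

Definition uniform_dist : V -> R := fun _ => (#|V|%:R)^-1.
End Functionals.

(* k-tuples (x_1,...,x_k) in [N]^k with pairwise distinct entries,
   encoded as injective finite functions 'I_k -> 'I_N ([N] = {0,...,N-1}). *)
Definition Theta (k N : nat) := {x : {ffun 'I_k -> 'I_N} | injectiveb x}.

Section Chains.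
Variables (R : realType) (k N : nat).

(* x with its i-th entry replaced by l; if l = x_j then entries i,j swapped
   (this is exactly x^{i,l} of the uniform chain; when l is not an entry
   of x, or l = x_i, it is plain replacement). *)
Definition upd_ffun (x : Theta k N) (i : 'I_k) (l : 'I_N) : {ffun 'I_k -> 'I_N} :=
  [ffun m => if m == i then l else if val x m == l then val x i else val x m].

Definition upd (x : Theta k N) (i : 'I_k) (l : 'I_N) : Theta k N :=
  insubd x (upd_ffun x i l).

Definition allowed (x : Theta k N) (i : 'I_k) (l : 'I_N) : bool :=
  (l \notin codom (val x)) || (l == val x i).

Definition P_cc (x y : Theta k N) : R :=
  \sum_(i : 'I_k) \sum_(l : 'I_N | allowed x i l)
     (if upd x i l == y then (k%:R * (N - k + 1)%N%:R)^-1 else 0).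

Definition P_ucc (x y : Theta k N) : R :=
  \sum_(i : 'I_k) \sum_(l : 'I_N)
     (if upd x i l == y then (k%:R * N%:R)^-1 else 0).
End Chains.

From mathcomp Require Import all_boot all_order all_algebra perm.
From mathcomp Require Import classical_sets boolp reals exp.
From mathcomp Require Import ring lra.
Import Order.TTheory GRing.Theory Num.Theory.
Local Open Scope ring_scope.

(* Both chains have the uniform stationary distribution and the entropy is
   non-negative, so it suffices to compare Dirichlet forms.  The uniform chain
   makes two kinds of moves: recolouring a position with an unused colour,
   which the standard chain makes as well, and swapping the colours x_i, x_j of
   two positions.  A swap is simulated by three standard moves through an
   unused colour c: recolour i with c, then j with x_i, then i with x_j.  Each
   step maps (state, unused colour) pairs bijectively onto themselves, so by
   Cauchy-Schwarz and averaging over the N - k unused colours,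
   (N - k) S <= 9 (k - 1) D, where D and S are the recolouring and swap
   energies.  With the transition weights 1/(kN) and 1/(k(N - k + 1)) this
   gives E_ucc <= 19 E_cc. *)

Section LogSobolev.
Local Open Scope classical_set_scope.
Variables (R : realType) (V : finType).
Implicit Types (P : V -> V -> R) (pi f g : V -> R).

Lemma dirichlet_ge0 P pi g : (forall x, 0 <= pi x) -> (forall x y, 0 <= P x y) ->
  0 <= dirichlet P pi g.
Proof.
move=> pi0 P0; rewrite mulr_ge0 ?invr_ge0 ?ler0n //.
apply: sumr_ge0 => x _; apply: sumr_ge0 => y _.
exact: mulr_ge0 (mulr_ge0 (sqr_ge0 _) (pi0 x)) (P0 x y).
Qed.

Lemma subr_le_mul_ln_div (y m : R) : 0 < y -> 0 < m -> y - m <= y * ln (y / m).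
Proof.
move=> y0 m0; have my0 : 0 < m / y by rewrite divr_gt0.
have := @le_ln1Dx R (m / y - 1); rewrite (addrC 1) subrK => /(_ ltac:(lra)) ln_le.
rewrite -invf_div lnV ?posrE // mulrN.
have -> : y - m = y * (1 - m / y) by field; rewrite gt_eqF.
by rewrite -mulrN ler_pM2l //; lra.
Qed.

Lemma entropy_ge0 pi f : (forall x, 0 <= pi x) -> \sum_x pi x <= 1 ->
  (forall x, 0 <= f x) -> 0 <= entropy pi f.
Proof.
move=> pi0 pi_le1 f0; set m := expect pi f.
have pif0 x : 0 <= pi x * f x by rewrite mulr_ge0.
have [m0 | m_gt0] := eqVneq m 0.
  rewrite /entropy big1 // => x _; case: ifP => _; first by rewrite mulr0.
  by rewrite mulrA (psumr_eq0P (fun y _ => pif0 y) m0 isT) ?mul0r.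
have {}m_gt0 : 0 < m by rewrite lt_def m_gt0 sumr_ge0.
apply: (@le_trans _ _ (\sum_x pi x * (f x - m))).
  under eq_bigr => x _ do rewrite mulrBr.
  by rewrite sumrB -/(expect pi f) -/m -mulr_suml subr_ge0 ler_piMl // ltW.
apply: ler_sum => x _; apply: ler_wpM2l => //; case: eqP => [-> | /eqP fx0].
  by rewrite sub0r oppr_le0 ltW.
by apply: subr_le_mul_ln_div => //; rewrite lt_def fx0 f0.
Qed.

Lemma uniform_dist_ge0 (x : V) : 0 <= uniform_dist R x.
Proof. by rewrite invr_ge0 ler0n. Qed.

Lemma sum_uniform_dist_le1 : \sum_(x : V) uniform_dist R x <= 1.
Proof.
rewrite sumr_const (@eq_card _ _ V) //.
have [-> | V_gt0] := posnP #|V|; first by rewrite mulr0n.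
by rewrite -[_ *+ #|V|]mulr_natr mulVf ?pnatr_eq0 -?lt0n.
Qed.

Lemma logSobolev_comparison P Q pi (c : R) : 0 < c ->
  (forall g, 0 <= dirichlet P pi g) ->
  (forall g, dirichlet P pi g <= c * dirichlet Q pi g) ->
  (forall f, (forall x, 0 <= f x) -> 0 <= entropy pi f) ->
  c^-1 * logSobolev P pi <= logSobolev Q pi.
Proof.
move=> c_gt0 EP_ge0 EP_le Ent_ge0; rewrite /logSobolev.
set A := (X in _ * inf X <= _); set B := (X in _ <= inf X).
have A_lb : lbound A 0 by move=> _ [f [f0 _ ->]]; rewrite divr_ge0 ?Ent_ge0.
have [[r Br] | B0] := pselect (B !=set0); last first.
  have /nonemptyPn -> := B0.
  suff -> : A = set0 by rewrite inf0 mulr0.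
  apply/nonemptyPn => -[_ [f [f0 fnc _]]]; apply: B0.
  by exists (dirichlet Q pi (fun x => Num.sqrt (f x)) / entropy pi f), f.
apply: lb_le_inf; first by exists r.
move=> _ [f [f0 fnc ->]].
have Af : A (dirichlet P pi (fun x => Num.sqrt (f x)) / entropy pi f) by exists f.
rewrite ler_pdivrMl // (le_trans (ge_inf (ex_intro _ 0 A_lb) Af)) // mulrA.
by rewrite ler_wpM2r ?invr_ge0 ?Ent_ge0.
Qed.
End LogSobolev.

Section ThetaMoves.
Context {k N : nat}.
Notation T := (Theta k N).
Implicit Types (x : T) (i j : 'I_k) (c l : 'I_N).

Lemma Theta_inj x : injective (val x).
Proof. exact/injectiveP/(valP x). Qed.

Definition fresh x l := l \notin codom (val x).

Lemma freshP x l : reflect (forall m, val x m != l) (fresh x l).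
Proof.
apply: (iffP idP) => [/codomP fr m | fr]; first by apply/eqP => E; apply: fr; exists m.
by apply/codomP => -[m E]; move: (fr m); rewrite E eqxx.
Qed.

Lemma card_fresh x : #|[pred c | fresh x c]| = (N - k)%N.
Proof.
have := cardC (mem (codom (val x))).
rewrite card_codom ?card_ord; last exact: Theta_inj.
by move/(congr1 (subn^~ k)); rewrite addKn => <-; apply: eq_card.
Qed.

Lemma upd_ffun_fresh x i c :
  fresh x c -> upd_ffun x i c = [ffun m => if m == i then c else val x m].
Proof. by move/freshP=> fr; apply/ffunP => m; rewrite !ffunE (negPf (fr m)). Qed.

Lemma upd_ffun_occupied x i j : upd_ffun x i (val x j) = [ffun m => val x (tperm i j m)].
Proof.
apply/ffunP => m; rewrite !ffunE (inj_eq (@Theta_inj x)).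
by case: tpermP => [->|->|/eqP/negPf -> /eqP/negPf ->]; rewrite ?eqxx //; case: eqP => [->|].
Qed.

Lemma upd_ffun_inj x i l : injectiveb (upd_ffun x i l).
Proof.
apply/injectiveP; have [/codomP[j ->] | fr] := boolP (l \in codom (val x)).
  by rewrite upd_ffun_occupied => m1 m2; rewrite !ffunE => /Theta_inj/perm_inj.
rewrite upd_ffun_fresh // => m1 m2; rewrite !ffunE; move/freshP: fr => fr.
have [-> | m1i] := eqVneq m1 i; have [-> | m2i] := eqVneq m2 i => // E.
- by move: (fr m2); rewrite E eqxx.
- by move: (fr m1); rewrite E eqxx.
- exact: Theta_inj E.
Qed.

Lemma updE x i l : val (upd x i l) = upd_ffun x i l.
Proof. by rewrite /upd insubdK //; apply: upd_ffun_inj. Qed.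

Lemma upd_id x i : upd x i (val x i) = x.
Proof. by apply/val_inj/ffunP => m; rewrite updE upd_ffun_occupied tperm1 ffunE perm1. Qed.

Lemma upd_freshE x i c m :
  fresh x c -> val (upd x i c) m = if m == i then c else val x m.
Proof. by move=> fr; rewrite updE upd_ffun_fresh // ffunE. Qed.

Definition recolour i (p : T * 'I_N) : T * 'I_N := (upd p.1 i p.2, val p.1 i).

Lemma recolour_fresh i p : fresh p.1 p.2 -> fresh (recolour i p).1 (recolour i p).2.
Proof.
case: p => x c /= fr; apply/freshP => m; rewrite upd_freshE //.
have [_ | mi] := eqVneq m i; first by apply: contraNneq fr => ->; apply: codom_f.
by apply: contra mi => /eqP/Theta_inj ->.
Qed.

Lemma recolourK i p : fresh p.1 p.2 -> recolour i (recolour i p) = p.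
Proof.
case: p => x c /= fr; have /= fr' := recolour_fresh i (x, c) fr.
rewrite /recolour /= upd_freshE // eqxx; congr (_, _).
apply/val_inj/ffunP => m; rewrite !upd_freshE //.
by have [-> | //] := eqVneq m i.
Qed.

Lemma recolour_comp_snd i j p : i != j -> fresh p.1 p.2 ->
  (recolour j (recolour i p)).2 = val p.1 j.
Proof. by case: p => x c ij fr /=; rewrite upd_freshE // eq_sym (negPf ij). Qed.

Lemma upd_swap_path i j p : i != j -> fresh p.1 p.2 ->
  upd (recolour j (recolour i p)).1 i (val p.1 j) = upd p.1 i (val p.1 j).
Proof.
case: p => x c ij fr; have fr1 := recolour_fresh i (x, c) fr.
have := recolour_fresh j _ fr1; rewrite (recolour_comp_snd i j (x, c) ij fr) => fr2.
apply/val_inj; rewrite [RHS]updE upd_ffun_occupied; apply/ffunP => m.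
rewrite ffunE upd_freshE //= upd_freshE //= upd_freshE //.
by case: tpermP => [->|->|/eqP/negPf -> /eqP/negPf ->]; rewrite ?eqxx // eq_sym (negPf ij).
Qed.

End ThetaMoves.

Lemma sqrrD3_le (R : realDomainType) (a b c : R) :
  (a + b + c) ^+ 2 <= 3 * (a ^+ 2 + b ^+ 2 + c ^+ 2).
Proof.
have := sqr_ge0 (a - b); have := sqr_ge0 (b - c); have := sqr_ge0 (a - c).
rewrite !sqrrB !sqrrD; lra.
Qed.

Lemma sum_codom (R : nmodType) (I J : finType) (f : I -> J) (F : J -> R) :
  injective f -> \sum_(l | l \in codom f) F l = \sum_i F (f i).
Proof.
move=> f_inj; rewrite -big_uniq /=; last by rewrite codomE map_inj_uniq ?enum_uniq.
by rewrite codomE big_map big_enum.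
Qed.

Lemma sum_neq_const (R : nmodType) (I : finType) (i : I) (a : R) :
  \sum_(j | j != i) a = a *+ #|I|.-1.
Proof. by rewrite sumr_const cardC1. Qed.

Lemma sum_offdiag (R : nmodType) (I : finType) (F : I -> R) :
  \sum_i \sum_(j | j != i) F j = (\sum_i F i) *+ #|I|.-1.
Proof.
rewrite (exchange_big_dep xpredT) //= -sumrMnl; apply: eq_bigr => j _.
by rewrite (eq_bigl (fun i => i != j)) => [|i]; rewrite ?sum_neq_const // eq_sym.
Qed.

Section Energies.
Context {R : realType} {k N : nat}.
Notation T := (Theta k N).
Implicit Types (g : T -> R) (x : T) (i j : 'I_k) (l : 'I_N) (p : T * 'I_N).

Definition grad2 g x i l : R := (g x - g (upd x i l)) ^+ 2.

Definition energy (A : T -> 'I_k -> 'I_N -> bool) g : R :=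
  \sum_x \sum_i \sum_(l | A x i l) grad2 g x i l.

Lemma dirichlet_upd_chain (A : T -> 'I_k -> 'I_N -> bool) (w : R) g :
  dirichlet (fun x y => \sum_i \sum_(l | A x i l) (if upd x i l == y then w else 0))
    (@uniform_dist R T) g = 2^-1 * (#|{: T}|%:R^-1 * w) * energy A g.
Proof.
rewrite /dirichlet /energy -mulrA; congr (_ * _); rewrite mulr_sumr.
apply: eq_bigr => x _; rewrite mulr_sumr.
under eq_bigr => y _ do rewrite mulr_sumr.
rewrite exchange_big; apply: eq_bigr => i _.
under eq_bigr => y _ do rewrite mulr_sumr.
rewrite mulr_sumr exchange_big; apply: eq_bigr => l _.
rewrite (bigD1 (upd x i l)) //= eqxx big1 ?addr0 => [|y /negbTE ne].
  by rewrite /grad2 /uniform_dist -mulrA mulrC.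
by rewrite eq_sym ne mulr0.
Qed.

Lemma energy_ge0 (A : T -> 'I_k -> 'I_N -> bool) g : 0 <= energy A g.
Proof. by do 3!(apply: sumr_ge0 => ? _); apply: sqr_ge0. Qed.

Definition fresh_energy g := energy (fun x _ l => fresh x l) g.

Definition swap_energy g : R := \sum_x \sum_i \sum_(j | j != i) grad2 g x i (val x j).

Lemma energy_total g : energy (fun _ _ _ => true) g = fresh_energy g + swap_energy g.
Proof.
rewrite /energy -big_split; apply: eq_bigr => x _; rewrite -big_split; apply: eq_bigr => i _.
rewrite (bigID (fresh x)) /=; congr (_ + _).
rewrite (eq_bigl (mem (codom (val x)))) => [|l]; last by rewrite /fresh negbK.
rewrite sum_codom; last exact: Theta_inj.
by rewrite (bigD1 i) // /= {1}/grad2 upd_id subrr expr2 mul0r add0r.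
Qed.

Lemma fresh_energy_le_allowed g : fresh_energy g <= energy (@allowed k N) g.
Proof.
apply: ler_sum => x _; apply: ler_sum => i _.
rewrite [leRHS](bigID (fresh x)) /=.
have -> : \sum_(l | allowed x i l && fresh x l) grad2 g x i l
          = \sum_(l | fresh x l) grad2 g x i l.
  by apply: eq_bigl => l; apply/andb_idl => fr; rewrite /allowed -/(fresh x l) fr.
by rewrite lerDl sumr_ge0 // => l _; apply: sqr_ge0.
Qed.

Lemma sum_fresh_recolour i (F : T * 'I_N -> R) :
  \sum_(p | fresh p.1 p.2) F (recolour i p) = \sum_(p | fresh p.1 p.2) F p.
Proof.
rewrite [RHS](reindex_onto (recolour i) (recolour i)) => [|p]; last exact: recolourK.
apply: eq_bigl => p; apply/idP/andP => [fr | [fr /eqP <-]]; last exact: recolour_fresh.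
by rewrite recolourK ?eqxx ?recolour_fresh.
Qed.

Definition fresh_energy_at g i := \sum_(p | fresh p.1 p.2) grad2 g p.1 i p.2.

Lemma fresh_energyE g : fresh_energy g = \sum_i fresh_energy_at g i.
Proof. by rewrite /fresh_energy /energy exchange_big; apply: eq_bigr => i _; rewrite pair_big_dep. Qed.

Lemma swap_energy_freshE g :
  swap_energy g *+ (N - k)
  = \sum_i \sum_(j | j != i) \sum_(p | fresh p.1 p.2) grad2 g p.1 i (val p.1 j).
Proof.
rewrite /swap_energy exchange_big -sumrMnl; apply: eq_bigr => i _.
rewrite exchange_big -sumrMnl; apply: eq_bigr => j _.
rewrite -(pair_big_dep xpredT (fun x c => fresh x c) (fun x _ => grad2 g x i (val x j))).
rewrite -sumrMnl; apply: eq_bigr => x _.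
by rewrite -(card_fresh x) -sumr_const; apply: eq_bigl => c; rewrite inE.
Qed.

Lemma grad2_swap_le g i j p : i != j -> fresh p.1 p.2 ->
  grad2 g p.1 i (val p.1 j) <= 3 * (grad2 g p.1 i p.2
     + grad2 g (recolour i p).1 j (recolour i p).2
     + grad2 g (recolour j (recolour i p)).1 i (recolour j (recolour i p)).2).
Proof.
move=> ij fr; rewrite recolour_comp_snd // /grad2 upd_swap_path //.
have -> : g p.1 - g (upd p.1 i (val p.1 j))
  = (g p.1 - g (recolour i p).1) + (g (recolour i p).1 - g (recolour j (recolour i p)).1)
    + (g (recolour j (recolour i p)).1 - g (upd p.1 i (val p.1 j))) by ring.
exact: sqrrD3_le.
Qed.

Lemma fresh_sum_swap_le g i j : j != i ->
  \sum_(p | fresh p.1 p.2) grad2 g p.1 i (val p.1 j)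
  <= 3 * (fresh_energy_at g i + fresh_energy_at g j + fresh_energy_at g i).
Proof.
rewrite eq_sym => ij; apply: le_trans (ler_sum _ (fun p fr => grad2_swap_le g i j p ij fr)) _.
rewrite -mulr_sumr !big_split /=.
rewrite (sum_fresh_recolour i (fun q => grad2 g q.1 j q.2)).
rewrite (sum_fresh_recolour i (fun q => grad2 g (recolour j q).1 i (recolour j q).2)).
by rewrite (sum_fresh_recolour j (fun q => grad2 g q.1 i q.2)).
Qed.

Lemma swap_energy_le g : swap_energy g *+ (N - k) <= fresh_energy g *+ (9 * k.-1).
Proof.
rewrite swap_energy_freshE fresh_energyE.
apply: le_trans (ler_sum _ (fun i _ => ler_sum _ (fresh_sum_swap_le g i))) _.
set S := fresh_energy_at g.
have -> : \sum_i \sum_(j | j != i) 3 * (S i + S j + S i)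
  = 3 * (\sum_i \sum_(j | j != i) S i + \sum_i \sum_(j | j != i) S j
         + \sum_i \sum_(j | j != i) S i).
  by rewrite -!big_split mulr_sumr; apply: eq_bigr => i _; rewrite -!big_split mulr_sumr.
under [X in X + _ + _]eq_bigr => i _ do rewrite sum_neq_const.
under [X in _ + _ + X]eq_bigr => i _ do rewrite sum_neq_const.
rewrite sum_offdiag sumrMnl card_ord mulnC mulrnA.
set u := (\sum_i S i) *+ k.-1; lra.
Qed.
End Energies.

Lemma ucc_cc_weight_le (R : realFieldType) (a kk D S E : R) :
  1 <= a -> 1 <= kk -> 0 <= D -> D <= E -> a * S <= 9 * (kk - 1) * D ->
  (kk * (a + kk))^-1 * (D + S) <= 19 * ((kk * (a + 1))^-1 * E).
Proof.
move=> a1 kk1 D0 DE aS.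
have key : (a + 1) * (D + S) <= 19 * (a + kk) * E.
  have : a * ((a + 1) * (D + S)) <= a * (19 * (a + kk) * E).
    have h1 : (a + 1) * (a + 9 * (kk - 1)) <= 19 * a * (a + kk) by nra.
    have h2 : 0 <= 19 * a * (a + kk) * (E - D) by rewrite !mulr_ge0 //; lra.
    nra.
  by rewrite ler_pM2l //; lra.
have d0 : 0 < kk * (a + kk) * (a + 1) by rewrite !mulr_gt0 //; lra.
have [kk0 akk0 a10] : [/\ kk != 0, a + kk != 0 & a + 1 != 0].
  by split; rewrite gt_eqF //; lra.
have -> : (kk * (a + kk))^-1 * (D + S) = (a + 1) * (D + S) / (kk * (a + kk) * (a + 1)).
  by field; rewrite kk0 akk0 a10.
have -> : 19 * ((kk * (a + 1))^-1 * E) = 19 * (a + kk) * E / (kk * (a + kk) * (a + 1)).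
  by field; rewrite kk0 akk0 a10.
by rewrite ler_pM2r ?invr_gt0.
Qed.

Lemma P_ucc_ge0 (R : realType) (k N : nat) (x y : Theta k N) : 0 <= P_ucc R x y.
Proof.
do 2!(apply: sumr_ge0 => ? _); case: ifP => // _.
by rewrite invr_ge0 mulr_ge0 ?ler0n.
Qed.

Lemma dirichlet_ucc_le_cc (R : realType) (k N : nat) (g : Theta k N -> R) :
  (0 < k)%N -> (k < N)%N ->
  dirichlet (@P_ucc R k N) (@uniform_dist R (Theta k N)) g
  <= 19 * dirichlet (@P_cc R k N) (@uniform_dist R (Theta k N)) g.
Proof.
move=> k_gt0 kN; rewrite /P_ucc /P_cc !dirichlet_upd_chain energy_total.
rewrite -!mulrA [leRHS]mulrCA ler_wpM2l ?invr_ge0 ?ler0n //.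
rewrite [leRHS]mulrCA ler_wpM2l ?invr_ge0 ?ler0n //.
have NE : N%:R = (N - k)%:R + k%:R :> R by rewrite -natrD subnK // ltnW.
rewrite NE natrD.
apply: (@ucc_cc_weight_le R ((N - k)%:R) k%:R (fresh_energy g) (swap_energy g)).
- by rewrite ler1n subn_gt0.
- by rewrite ler1n.
- exact: energy_ge0.
- exact: fresh_energy_le_allowed.
- have -> : 9 * (k%:R - 1) = (9 * k.-1)%N%:R :> R by rewrite natrM -subn1 natrB.
  by rewrite !mulr_natl; apply: swap_energy_le.
Qed.

Theorem mainTheorem7 (R : realType) (k N : nat) :
  (1 <= k)%N -> (k < N)%N ->
  (19%:R)^-1 * logSobolev (@P_ucc R k N) (@uniform_dist R (Theta k N))
    <= logSobolev (@P_cc R k N) (@uniform_dist R (Theta k N)).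
Proof.
move=> k_gt0 kN; apply: logSobolev_comparison => [| g | g | f f_ge0].
- by rewrite ltr0n.
- by apply: dirichlet_ge0 => [x | x y]; [apply: uniform_dist_ge0 | apply: P_ucc_ge0].
- exact: dirichlet_ucc_le_cc.
- apply: entropy_ge0 => // [x |]; [apply: uniform_dist_ge0 | apply: sum_uniform_dist_le1].
Qed.
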